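(* Let $K\ge 2$ and let $p,q$ be real numbers with $0<q<p$ and $q=\frac{1-p}{K-1}$. Let $N\ge 1$ and let $y_1,\dots,y_N\in\{1,\dots,K\}$ be observed outputs of the randomized response mechanism, with empirical histogram $\phi\in\Delta$, $\phi_y=\frac{1}{N}|\{u: y_u=y\}|$. Then the likelihood $L(\theta\mid\phi)=\prod_{u=1}^N\bigl(q+(p-q)\theta_{y_u}\bigr)$ has a unique maximizer over $\theta\in\Delta$, and this maximizer equals $\mathrm{MLE}^*(\phi)$.
   Context: $\Delta=\{\theta\in\mathbb{R}^K:\theta_i\ge 0,\ \sum_i\theta_i=1\}$. The randomized response (RR) mechanism on $\{1,\dots,K\}$ outputs, on input $x$, the value $y$ with probability $p$ if $y=x$ and $q$ otherwise; thus if the input is distributed according to $\theta\in\Delta$, the output $y$ has probability $q+(p-q)\theta_y$. Throughout, RR is an $\varepsilon$-locally differentially private mechanism with $\varepsilon=\log(p/q)>0$, so $0<q<p$. Define $\mathrm{MLE}^*(\phi)$ as follows. For a real $\tau$ let $m(\tau)=|\{i:\phi_i<\tau\}|$ and, when $\sum_{i:\phi_i\ge\tau}\phi_i>0$, $c_\tau=\frac{1-m(\tau)\,q}{\sum_{i:\phi_i\ge\tau}\phi_i}$. Let $\tau^*$ be the smallest $\tau\in\{\phi_1,\dots,\phi_K\}$ such that $c_\tau\phi_i\ge q$ for every $i$ with $\phi_i\ge\tau$. Then $\mathrm{MLE}^*(\phi)_i=0$ if $\phi_i<\tau^*$ and $\mathrm{MLE}^*(\phi)_i=\frac{c_{\tau^*}\phi_i-q}{p-q}$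 otherwise. *)

From mathcomp Require Import all_boot all_order all_algebra.
Set Implicit Arguments. Unset Strict Implicit. Unset Printing Implicit Defensive.
Import Order.TTheory GRing.Theory Num.Theory.
Local Open Scope ring_scope.

Section RR.
Variable R : realFieldType.
Variable K : nat.

Definition in_simplex (theta : 'I_K -> R) : Prop :=
  (forall i, 0 <= theta i) /\ \sum_(i < K) theta i = 1.

Definition histogram (N : nat) (y : 'I_N -> 'I_K) (i : 'I_K) : R :=
  #|[set u | y u == i]|%:R / N%:R.

Definition likelihood (p q : R) (N : nat) (y : 'I_N -> 'I_K)
  (theta : 'I_K -> R) : R :=
  \prod_(u < N) (q + (p - q) * theta (y u)).

Variables (p q : R) (phi : 'I_K -> R).

Definition mcount (tau : R) : nat := #|[set i | phi i < tau]|.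
Definition upper_sum (tau : R) : R := \sum_(i | tau <= phi i) phi i.
Definition c_tau (tau : R) : R := (1 - (mcount tau)%:R * q) / upper_sum tau.
Definition admissible (tau : R) : bool :=
  (0 < upper_sum tau) && [forall i, (tau <= phi i) ==> (q <= c_tau tau * phi i)].

(* tau^* = smallest admissible tau among {phi_1,...,phi_K}
   (default 1 if none is admissible; the theorem asserts one is) *)
Definition tau_star : R := \big[Num.min/1]_(i | admissible (phi i)) phi i.

Definition MLE_star (i : 'I_K) : R :=
  if phi i < tau_star then 0 else (c_tau tau_star * phi i - q) / (p - q).
End RR.

(* Write o := q + (p - q) theta* for the output distribution of the candidate
   theta* := MLE_star p q phi, and x for that of an arbitrary theta in the simplex.
   The choice of tau* makes sum_i phi_i x_i / o_i <= 1 a Kuhn-Tucker certificate,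
   tight only if theta vanishes where phi_i < tau*.  The ratio of the likelihoods
   of theta and theta* is the product of the N factors x_(y_u) / o_(y_u), whose
   arithmetic mean is exactly that sum, so by AM-GM it is at most 1; equality forces
   every factor to be 1, i.e. x = o on the support of phi, and hence theta = theta*.
   An admissible threshold exists because the largest value of phi is one, as
   K q <= 1. *)

From mathcomp Require Import all_boot all_order all_algebra.
From mathcomp Require Import ring lra.
From Stdlib Require Import FunctionalExtensionality.
Import Order.TTheory GRing.Theory Num.Theory.

Set Implicit Arguments.
Unset Strict Implicit.
Unset Printing Implicit Defensive.

Local Open Scope ring_scope.

Section MeanProduct.
Variables (R : realFieldType) (I : finType) (a : I -> R).
Hypotheses (a_ge0 : forall i, 0 <= a i) (sum_le_card : \sum_i a i <= #|I|%:R).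

Let mu := (\sum_i a i) / #|I|%:R.

Let mu_ge0 : 0 <= mu.
Proof. by rewrite divr_ge0 ?sumr_ge0. Qed.

Let mu_le1 : mu <= 1.
Proof.
have [I0 | I_gt0] := posnP #|I|; first by rewrite /mu I0 invr0 mulr0.
by rewrite ler_pdivrMr ?ltr0n // mul1r.
Qed.

Let AGM : \prod_i a i <= mu ^+ #|I| ?= iff [forall i, forall j, a i == a j].
Proof. exact: leif_AGM (fun i _ => a_ge0 i). Qed.

Lemma prod_le1_of_sum_le_card : \prod_i a i <= 1.
Proof. exact: le_trans (AGM : _ <= _) (exprn_ile1 _ mu_ge0 mu_le1). Qed.

Lemma prod_eq1_of_sum_le_card : \prod_i a i = 1 -> forall i, a i = 1.
Proof.
move=> prod1 i; have I_gt0 : (0 < #|I|)%N by apply/card_gt0P; exists i.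
have mu1 : mu = 1.
  apply/le_anti; rewrite mu_le1 -(expr_ge1 I_gt0 mu_ge0) -prod1.
  exact: AGM.
have /forallP/(_ i)/forallP a_const : [forall i, forall j, a i == a j].
  by rewrite -(eq_leif AGM) prod1 mu1 expr1n.
rewrite -mu1 /mu (eq_bigr (fun=> a i)) => [|j _]; last exact/esym/eqP/a_const.
by rewrite sumr_const -[#|xpredT|]/#|I| -(mulr_natr (a i)) mulfK // pnatr_eq0 -lt0n.
Qed.
End MeanProduct.

Section Histogram.
Variables (R : realFieldType) (K N : nat) (y : 'I_N -> 'I_K).
Hypothesis N_gt0 : (0 < N)%N.

Notation phi := (histogram R y).

Lemma sum_histogram (f : 'I_K -> R) :
  \sum_(u < N) f (y u) = N%:R * \sum_i phi i * f i.
Proof.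
rewrite (partition_big y xpredT) //= mulr_sumr; apply: eq_bigr => i _.
rewrite (eq_bigr (fun=> f i)) => [|u /eqP -> //].
rewrite sumr_const /histogram cardsE mulrA mulrCA divff ?pnatr_eq0 -?lt0n //.
by rewrite mulr1 mulr_natl.
Qed.

Lemma histogram_ge0 i : 0 <= phi i.
Proof. by rewrite divr_ge0. Qed.

Lemma histogram_sum1 : \sum_i phi i = 1.
Proof.
apply: (@mulfI _ N%:R); first by rewrite pnatr_eq0 -lt0n.
have := sum_histogram (fun=> 1); rewrite sumr_const card_ord mulr1.
by under eq_bigr do rewrite mulr1; rewrite -mulr_natr mul1r => <-.
Qed.

Lemma histogram_gt0_observed i : 0 < phi i -> exists u, y u = i.
Proof.
move=> phi_gt0; have : (0 < #|[set u | y u == i]|)%N.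
  by rewrite lt0n; apply: contraTneq phi_gt0 => cnt0; rewrite /histogram cnt0 mul0r ltxx.
by move/card_gt0P => [u]; rewrite inE => /eqP; exists u.
Qed.

End Histogram.

Section Threshold.
Variables (R : realFieldType) (K : nat) (q : R) (phi : 'I_K -> R).
Hypotheses (q_gt0 : 0 < q) (Kq_le1 : K%:R * q <= 1).
Hypotheses (phi_ge0 : forall i, 0 <= phi i) (phi_sum1 : \sum_i phi i = 1).

Lemma mcount_mulr tau :
  (mcount phi tau)%:R * q = \sum_i (if phi i < tau then q else 0).
Proof. by rewrite -big_mkcond sumr_const mulr_natl /mcount cardsE. Qed.

Lemma upper_sumE tau :
  upper_sum phi tau = \sum_i (if tau <= phi i then phi i else 0).
Proof. exact: big_mkcond. Qed.

Lemma admissible_suff tau : 0 < tau -> 0 < upper_sum phi tau ->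
  q * upper_sum phi tau <= (1 - (mcount phi tau)%:R * q) * tau ->
  admissible q phi tau.
Proof.
move=> tau_gt0 S_gt0 qS_le; rewrite /admissible S_gt0; apply/forall_inP => i tau_le.
have q_le : q <= c_tau q phi tau * tau by rewrite mulrAC ler_pdivlMr // mulrC.
have c_gt0 : 0 < c_tau q phi tau by rewrite -(pmulr_lgt0 _ tau_gt0) (lt_le_trans q_gt0).
by rewrite (le_trans q_le) // ler_pM2l.
Qed.

Let phi_le1 i : phi i <= 1.
Proof. by rewrite -phi_sum1 (bigD1 i) //= lerDl sumr_ge0. Qed.

Lemma exists_admissible : exists i, admissible q phi (phi i).
Proof.
have [i0 _ | K_empty] := pickP (@predT 'I_K); last first.
  by move: phi_sum1; rewrite big_pred0 // => /esym/eqP; rewrite oner_eq0.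
pose j := [arg max_(k > i0) phi k]%O.
have phi_le_j k : phi k <= phi j by rewrite /j; case: arg_maxP => // j' _; apply.
exists j.
have phi_j_gt0 : 0 < phi j.
  rewrite lt_neqAle phi_ge0 andbT; apply/eqP => phi_j0.
  suff : \sum_i phi i = 0 by rewrite phi_sum1 => /eqP; rewrite oner_eq0.
  by apply: big1 => k _; apply/le_anti; rewrite phi_ge0 andbT phi_j0.
have S_gt0 : 0 < upper_sum phi (phi j).
  by rewrite /upper_sum (bigD1 j) //= ltr_pwDl // sumr_ge0.
have qS : q * upper_sum phi (phi j) =
    (K%:R * q - (mcount phi (phi j))%:R * q) * phi j.
  have -> : K%:R * q = \sum_(i < K) q by rewrite sumr_const card_ord mulr_natl.
  rewrite upper_sumE mcount_mulr -sumrB mulr_sumr mulr_suml; apply: eq_bigr => k _.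
  case: leP => [le_jk | _]; last by rewrite subrr mulr0 mul0r.
  by rewrite (@le_anti _ _ (phi k) (phi j)) ?le_jk ?phi_le_j ?subr0.
by apply: admissible_suff => //; rewrite qS ler_pM2r // lerD2r.
Qed.

Notation t := (tau_star q phi).

Lemma tau_star_le i : admissible q phi (phi i) -> t <= phi i.
Proof. exact: (bigmin_le_cond _ (P := fun k => admissible q phi (phi k))). Qed.

Lemma tau_star_mem : exists2 j, admissible q phi (phi j) & t = phi j.
Proof.
have [i0 adm_i0] := exists_admissible; rewrite /tau_star.
have [j adm_j ->] := eq_bigmin (x := 1) _ (fun k => admissible q phi (phi k)) phi
  adm_i0 (fun i _ => phi_le1 i).
by exists j.
Qed.

Notation S := (upper_sum phi t).
Notation c := (c_tau q phi t).
Notation m := (mcount phi t).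

Lemma upper_sum_tau_star_gt0 : 0 < S.
Proof. by have [j /andP[S_gt0 _] ->] := tau_star_mem. Qed.

Lemma c_tau_star_ge_q i : t <= phi i -> q <= c * phi i.
Proof.
have [j /andP[_ /forall_inP adm_j] ->] := tau_star_mem; exact: adm_j.
Qed.

Lemma c_tau_star_gt0 : 0 < c.
Proof.
have [j _ t_j] := tau_star_mem.
have q_le : q <= c * t by rewrite {2}t_j c_tau_star_ge_q // -t_j.
rewrite ltNge; apply: contraTN q_le => c_le0.
by rewrite -ltNge (le_lt_trans _ q_gt0) // mulr_le0_ge0 // t_j.
Qed.

Lemma c_tau_star_mul_upper_sum : c * S = 1 - m%:R * q.
Proof. by rewrite /c_tau divfK // gt_eqF // upper_sum_tau_star_gt0. Qed.

Lemma c_tau_star_lt_q i : phi i < t -> c * phi i < q.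
Proof.
move=> lt_i; rewrite ltNge; apply/negP => q_le_i.
pose j := [arg max_(k > i | phi k < t) phi k]%O.
have [lt_j j_max] : phi j < t /\ forall k, phi k < t -> phi k <= phi j.
  by rewrite /j; case: arg_maxP => // k lt_k k_max; split=> // k' /k_max.
have c_gt0 := c_tau_star_gt0.
have q_le_j : q <= c * phi j.
  by rewrite (le_trans q_le_i) // ler_pM2l // j_max.
have phi_j_gt0 : 0 < phi j.
  by rewrite -(pmulr_rgt0 _ c_gt0) (lt_le_trans q_gt0).
(* Lowering the threshold from [t] to [phi j] only activates coordinates equal to
   [phi j], and these satisfy [q <= c * phi j]: so [phi j] is admissible, against the
   minimality of [t]. *)
suff /tau_star_le : admissible q phi (phi j) by rewrite leNgt lt_j.
pose Z := \sum_k (if (phi j <= phi k) && (phi k < t) then 1 else 0 : R).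
have Z_ge0 : 0 <= Z by apply: sumr_ge0 => k _; case: ifP.
have S_j : upper_sum phi (phi j) = S + phi j * Z.
  rewrite !upper_sumE mulr_sumr -big_split; apply: eq_bigr => k _ /=.
  case: (leP (phi j) (phi k)) => le_jk; case: (leP t (phi k)) => le_tk /=;
    rewrite ?mulr0 ?mulr1 ?addr0 ?add0r //; try lra.
  by apply: le_anti; rewrite le_jk j_max.
have m_j : (mcount phi (phi j))%:R * q = m%:R * q - q * Z.
  rewrite !mcount_mulr mulr_sumr -sumrB; apply: eq_bigr => k _ /=.
  case: (leP (phi j) (phi k)) => le_jk; case: (leP t (phi k)) => le_tk /=;
    rewrite ?mulr0 ?mulr1 ?subr0 ?subrr //; lra.
have S_gt0 := upper_sum_tau_star_gt0.
have cS := c_tau_star_mul_upper_sum.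
have jZ_ge0 : 0 <= phi j * Z by rewrite mulr_ge0 // ltW.
apply: admissible_suff => //; rewrite S_j ?m_j; first lra.
have : q * S <= c * phi j * S by rewrite ler_pM2r.
nra.
Qed.

End Threshold.

Definition rr_output (R : realFieldType) (K : nat) (p q : R) (theta : 'I_K -> R)
  (i : 'I_K) : R := q + (p - q) * theta i.

Section MaximumLikelihood.
Variables (R : realFieldType) (K : nat) (p q : R) (phi : 'I_K -> R).
Hypotheses (q_gt0 : 0 < q) (q_lt_p : q < p) (rr_stochastic : p + (K%:R - 1) * q = 1).
Hypotheses (phi_ge0 : forall i, 0 <= phi i) (phi_sum1 : \sum_i phi i = 1).

Let p_sub_q : p - q = 1 - K%:R * q.
Proof. by move: rr_stochastic; rewrite mulrBl mul1r; lra. Qed.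

Let Kq_le1 : K%:R * q <= 1.
Proof. by rewrite -subr_ge0 -p_sub_q subr_ge0 ltW. Qed.

Let p_sub_q_neq0 : p - q != 0.
Proof. by rewrite subr_eq0 gt_eqF. Qed.

Notation t := (tau_star q phi).
Notation S := (upper_sum phi t).
Notation c := (c_tau q phi t).
Notation m := (mcount phi t).
Notation theta_star := (MLE_star p q phi).

Let c_gt0 : 0 < c := c_tau_star_gt0 q_gt0 Kq_le1 phi_ge0 phi_sum1.
Let c_ge_q := c_tau_star_ge_q q_gt0 Kq_le1 phi_ge0 phi_sum1.
Let c_lt_q := c_tau_star_lt_q q_gt0 Kq_le1 phi_ge0 phi_sum1.
Let cS := c_tau_star_mul_upper_sum q_gt0 Kq_le1 phi_ge0 phi_sum1.

Let sum_inactive_phi : \sum_i (if phi i < t then phi i else 0) = 1 - S.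
Proof.
rewrite -phi_sum1 upper_sumE -sumrB; apply: eq_bigr => i _.
by case: ltP; rewrite ?subrr ?subr0.
Qed.

Let sum_active_q : \sum_i (if phi i < t then 0 else q) = K%:R * q - m%:R * q.
Proof.
have -> : K%:R * q = \sum_(i < K) q by rewrite sumr_const card_ord mulr_natl.
rewrite mcount_mulr -sumrB; apply: eq_bigr => i _.
by case: ltP; rewrite ?subrr ?subr0.
Qed.

Lemma rr_output_MLE_star i :
  rr_output p q theta_star i = if phi i < t then q else c * phi i.
Proof.
rewrite /rr_output /MLE_star; case: ifP => _; first by rewrite mulr0 addr0.
by rewrite mulrC divfK // addrC subrK.
Qed.

Lemma rr_output_MLE_star_gt0 i : 0 < rr_output p q theta_star i.
Proof.
rewrite rr_output_MLE_star; case: (ltP (phi i) t) => // le_t.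
exact: lt_le_trans q_gt0 (c_ge_q le_t).
Qed.

Lemma MLE_star_simplex : in_simplex theta_star.
Proof.
split=> [i | ].
  rewrite /MLE_star; case: (ltP (phi i) t) => // le_t.
  by rewrite divr_ge0 ?subr_ge0 ?c_ge_q // ltW.
apply: (mulfI p_sub_q_neq0); rewrite mulr1 mulr_sumr.
have -> : \sum_i (p - q) * theta_star i =
    \sum_i c * (if t <= phi i then phi i else 0) - \sum_i (if phi i < t then 0 else q).
  rewrite -sumrB; apply: eq_bigr => i _; rewrite /MLE_star.
  by case: ltP => _; rewrite ?mulr0 ?subr0 // mulrC divfK.
rewrite -mulr_sumr -upper_sumE cS sum_active_q p_sub_q; ring.
Qed.

Section Certificate.
Variable theta : 'I_K -> R.
Hypothesis theta_simplex : in_simplex theta.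

Let x := rr_output p q theta.
Let o := rr_output p q theta_star.

Let x_sub_q_ge0 i : 0 <= x i - q.
Proof.
by rewrite /x /rr_output addrC addKr mulr_ge0 ?subr_ge0 ?(ltW q_lt_p) ?theta_simplex.1.
Qed.

(* [phi i * (x i / o i) <= bound i], with equality when [t <= phi i]; the bounds
   sum to 1 because [\sum_i x i = p - q + K q]. *)
Let bound i := if phi i < t then phi i + (x i - q) / c else x i / c.

Let sum_bound : \sum_i bound i = 1.
Proof.
have -> : \sum_i bound i = \sum_i (if phi i < t then phi i else 0)
    + (\sum_i (x i - q) + \sum_i (if phi i < t then 0 else q)) / c.
  rewrite mulrDl !mulr_suml -!big_split; apply: eq_bigr => i _ /=.
  by rewrite /bound; case: ltP => _; field; rewrite gt_eqF.
have -> : \sum_i (x i - q) = p - q.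
  rewrite -[RHS]mulr1 -theta_simplex.2 mulr_sumr; apply: eq_bigr => i _.
  by rewrite /x /rr_output addrC addKr.
rewrite sum_inactive_phi sum_active_q p_sub_q.
have -> : 1 - K%:R * q + (K%:R * q - m%:R * q) = c * S by rewrite cS; ring.
by rewrite mulrC mulKf ?gt_eqF //; ring.
Qed.

Let bound_gap i : bound i - phi i * (x i / o i) =
  if phi i < t then (x i - q) * (q - c * phi i) / (c * q) else 0.
Proof.
rewrite /bound /o rr_output_MLE_star; case: (ltP (phi i) t) => le_t.
  by field; rewrite !gt_eqF.
have cphi_gt0 : 0 < c * phi i := lt_le_trans q_gt0 (c_ge_q le_t).
have phi_neq0 : phi i != 0 by apply: contraTneq cphi_gt0 => ->; rewrite mulr0 ltxx.
by field; rewrite phi_neq0 gt_eqF.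
Qed.

Let bound_gap_ge0 i : 0 <= bound i - phi i * (x i / o i).
Proof.
rewrite bound_gap; case: ifP => // lt_t.
apply: divr_ge0; last by rewrite mulr_ge0 // ltW.
by rewrite mulr_ge0 // subr_ge0 ltW // c_lt_q.
Qed.

Lemma sum_ratio_le1 : \sum_i phi i * (x i / o i) <= 1.
Proof. by rewrite -sum_bound -subr_ge0 -sumrB sumr_ge0. Qed.

Lemma sum_ratio_eq1_inactive : \sum_i phi i * (x i / o i) = 1 ->
  forall i, phi i < t -> theta i = 0.
Proof.
move=> ratio1 i lt_t.
have gaps0 : \sum_i (bound i - phi i * (x i / o i)) = 0.
  by rewrite sumrB sum_bound ratio1 subrr.
have /eqP := psumr_eq0P (fun k _ => bound_gap_ge0 k) gaps0 (i := i) isT.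
rewrite bound_gap lt_t mulf_eq0 invr_eq0 (gt_eqF (mulr_gt0 c_gt0 q_gt0)) orbF.
rewrite mulf_eq0 [q - _ == 0]subr_eq0 (gt_eqF (c_lt_q lt_t)) orbF /x /rr_output.
by rewrite addrC addKr mulf_eq0 (negbTE p_sub_q_neq0) => /eqP.
Qed.

Lemma eq_MLE_star_of_rr_output :
  (forall i, 0 < phi i -> x i = o i) -> theta = theta_star.
Proof.
move=> eq_xo.
have ratio1 : \sum_i phi i * (x i / o i) = 1.
  rewrite -phi_sum1; apply: eq_bigr => i _.
  have := phi_ge0 i; rewrite le_eqVlt => /orP[/eqP <- | /eq_xo ->].
    by rewrite mul0r.
  by rewrite divff ?mulr1 // gt_eqF // rr_output_MLE_star_gt0.
apply: functional_extensionality => i; case: (ltP (phi i) t) => [lt_t | le_t].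
  by rewrite /MLE_star lt_t (sum_ratio_eq1_inactive ratio1).
have phi_gt0 : 0 < phi i.
  by rewrite -(pmulr_rgt0 _ c_gt0) (lt_le_trans q_gt0) ?c_ge_q.
by have := eq_xo i phi_gt0; rewrite /x /o /rr_output => /addrI/(mulfI p_sub_q_neq0).
Qed.

End Certificate.
End MaximumLikelihood.

Section Likelihood.
Variables (R : realFieldType) (K N : nat) (p q : R) (y : 'I_N -> 'I_K).
Hypotheses (q_gt0 : 0 < q) (q_lt_p : q < p) (rr_stochastic : p + (K%:R - 1) * q = 1).
Hypothesis N_gt0 : (0 < N)%N.

Notation phi := (histogram R y).
Notation theta_star := (MLE_star p q phi).

Let phi_ge0 i : 0 <= phi i. Proof. exact: histogram_ge0. Qed.
Let phi_sum1 : \sum_i phi i = 1. Proof. exact: histogram_sum1. Qed.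

Let o := rr_output p q theta_star.
Let o_gt0 i : 0 < o i.
Proof. exact: rr_output_MLE_star_gt0 q_gt0 q_lt_p rr_stochastic phi_ge0 phi_sum1 i. Qed.

Let likelihood_MLE_star_gt0 : 0 < likelihood p q y theta_star.
Proof. by apply: prodr_gt0 => u _; exact: o_gt0. Qed.

Section Comparison.
Variable theta : 'I_K -> R.
Hypothesis theta_simplex : in_simplex theta.

Let ratio u := rr_output p q theta (y u) / o (y u).

Let likelihood_ratio :
  likelihood p q y theta = \prod_u ratio u * likelihood p q y theta_star.
Proof. by rewrite -big_split; apply: eq_bigr => u _; rewrite /= /ratio divfK ?gt_eqF. Qed.

Let ratio_ge0 u : 0 <= ratio u.
Proof.
apply: divr_ge0; last exact: ltW.
by rewrite addr_ge0 ?mulr_ge0 ?theta_simplex.1 // ?subr_ge0 ltW.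
Qed.

Let sum_ratio_le_card : \sum_u ratio u <= #|'I_N|%:R.
Proof.
rewrite (sum_histogram y N_gt0 (fun i => rr_output p q theta i / o i)) card_ord.
rewrite -[leRHS]mulr1 ler_pM2l ?ltr0n //.
exact (sum_ratio_le1 q_gt0 q_lt_p rr_stochastic phi_ge0 phi_sum1 theta_simplex).
Qed.

Lemma likelihood_le_MLE_star :
  likelihood p q y theta <= likelihood p q y theta_star.
Proof.
rewrite likelihood_ratio ler_piMl ?(ltW likelihood_MLE_star_gt0) //.
exact: prod_le1_of_sum_le_card ratio_ge0 sum_ratio_le_card.
Qed.

Lemma likelihood_eq_MLE_star :
  likelihood p q y theta = likelihood p q y theta_star -> theta = theta_star.
Proof.
move=> eq_L; have ratio_prod1 : \prod_u ratio u = 1.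
  by apply: (mulIf (lt0r_neq0 likelihood_MLE_star_gt0)); rewrite mul1r -likelihood_ratio.
apply: eq_MLE_star_of_rr_output => // i /histogram_gt0_observed[u <-].
exact/divr1_eq/(prod_eq1_of_sum_le_card ratio_ge0 sum_ratio_le_card ratio_prod1).
Qed.

End Comparison.
End Likelihood.

Theorem theorem1 (R : realFieldType) (K N : nat) (p q : R)
  (y : 'I_N -> 'I_K) :
  (2 <= K)%N -> 0 < q -> q < p -> q = (1 - p) / (K.-1)%:R -> (0 < N)%N ->
  let phi := histogram R y in
  (exists i : 'I_K, admissible q phi (phi i)) /\
  in_simplex (MLE_star p q phi) /\
  (forall theta : 'I_K -> R, in_simplex theta ->
     likelihood p q y theta <= likelihood p q y (MLE_star p q phi)) /\
  (forall theta : 'I_K -> R, in_simplex theta ->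
     likelihood p q y theta = likelihood p q y (MLE_star p q phi) ->
     theta = MLE_star p q phi).
Proof.
move=> K_ge2 q_gt0 q_lt_p q_def N_gt0 phi.
have K_gt0 : (0 < K)%N by apply: leq_trans K_ge2.
have rr_stochastic : p + (K%:R - 1) * q = 1.
  rewrite q_def -{1}(prednK K_gt0) -natr1 addrK mulrC divfK.
    by rewrite addrC subrK.
  by rewrite pnatr_eq0 -lt0n -ltnS prednK.
have phi_ge0 i : 0 <= phi i by exact: histogram_ge0.
have phi_sum1 : \sum_i phi i = 1 by exact: histogram_sum1.
have Kq_le1 : K%:R * q <= 1 by move: rr_stochastic; rewrite mulrBl mul1r; lra.
split; first exact: exists_admissible.
split; first exact: MLE_star_simplex.
split=> theta theta_simplex; first exact: likelihood_le_MLE_star.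
exact: likelihood_eq_MLE_star.
Qed.
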